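(* Let $\mathcal{G}=(V,E)$ be a connected hypergraph with $n>2$ vertices. Then $$\lambda_n(L_{\mathcal{G}})\ge\min\left\{\frac{d_{i_1}+d_{i_2}+\dots+d_{i_{|e|}}-|e|}{|e|}:\ e=\{i_1,\dots,i_{|e|}\}\in E\right\}.$$
   Context: A hypergraph $\mathcal{G}=(V,E)$ has a finite vertex set $V$ and a set $E$ of subsets of $V$ (edges), each of cardinality at least $2$. The degree $d_i$ is the number of edges containing $i$. The Laplacian $L_{\mathcal{G}}$ has $(L_{\mathcal{G}})_{ii}=d_i$ and $(L_{\mathcal{G}})_{ij}=-\sum_{e\in E,\, i,j\in e}\frac{1}{|e|-1}$ for $i\ne j$; $\lambda_n(L_{\mathcal{G}})$ is its largest eigenvalue. *)

From HB Require Import structures.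
From mathcomp Require Import all_boot all_order all_algebra.
From mathcomp Require Import reals.
Set Implicit Arguments. Unset Strict Implicit. Unset Printing Implicit Defensive.
Import Order.TTheory GRing.Theory Num.Theory.
Local Open Scope ring_scope.

Definition is_hypergraph (n : nat) (E : {set {set 'I_n}}) : Prop :=
  forall e, e \in E -> (2 <= #|e|)%N.

Definition hdeg (n : nat) (E : {set {set 'I_n}}) (i : 'I_n) : nat :=
  #|[set e in E | i \in e]|.

Definition hadj (n : nat) (E : {set {set 'I_n}}) : rel 'I_n :=
  fun i j => [exists e in E, (i \in e) && (j \in e)].

Definition hconnected (n : nat) (E : {set {set 'I_n}}) : Prop :=
  forall i j : 'I_n, connect (hadj E) i j.

Definition hLaplacian (R : realType) (n : nat) (E : {set {set 'I_n}}) : 'M[R]_n :=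
  \matrix_(i, j)
    if i == j then (hdeg E i)%:R
    else - \sum_(e in E | (i \in e) && (j \in e)) ((#|e|.-1)%:R)^-1.

Definition largest_eigenvalue (R : realType) (n : nat) (A : 'M[R]_n) (lam : R) : Prop :=
  eigenvalue A lam /\ (forall mu, eigenvalue A mu -> mu <= lam).

Definition edge_min (R : realType) (n : nat) (E : {set {set 'I_n}})
    (f : {set 'I_n} -> R) : R :=
  match [pick e in E] with
  | Some e0 => \big[Num.min/f e0]_(e in E) f e
  | None => 0
  end.

Definition edge_quantity (R : realType) (n : nat) (E : {set {set 'I_n}})
    (e : {set 'I_n}) : R :=
  ((\sum_(i in e) (hdeg E i)%:R) - #|e|%:R) / #|e|%:R.

From HB Require Import structures.
From mathcomp Require Import all_boot all_order all_algebra.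
From mathcomp Require Import reals.
From mathcomp Require Import complex spectral sesquilinear.
Import Order.TTheory GRing.Theory Num.Theory.
Local Open Scope sesquilinear_scope.
Local Open Scope ring_scope.

(* The Laplacian is real symmetric, hence unitarily diagonalisable:
   L = P^* diag(x) P.  Its diagonal entry d_i = \sum_k |P_ki|^2 x_k is then a
   convex combination of eigenvalues, so every degree is at most lambda_n.
   Finally (d_{i_1} + ... + d_{i_|e|} - |e|)/|e| is below the average degree
   on e, hence below lambda_n, and so is the minimum over the edges. *)

Lemma eigenvalue_diag_mx (F : fieldType) n (d : 'rV[F]_n) a :
  reflect (exists k, a = d 0 k) (eigenvalue (diag_mx d) a).
Proof.
rewrite eigenvalue_root_char char_poly_trig ?diag_mx_is_trig //.
rewrite (eq_bigr (fun k => 'X - (d 0 k)%:P)) => [|k _]; last by rewrite mxE eqxx.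
rewrite -(big_map (d 0) xpredT (fun x => 'X - x%:P)) root_prod_XsubC.
by apply: (iffP mapP) => -[k]; [move=> _ ->|move->]; exists k; rewrite ?mem_index_enum.
Qed.

Lemma eigenvalue_similar (F : fieldType) n (P D : 'M[F]_n) a : P \in unitmx ->
  eigenvalue (invmx P *m D *m P) a = eigenvalue D a.
Proof.
move=> Punit; apply/eigenvalueP/eigenvalueP => -[v vA v_neq0].
- exists (v *m invmx P); last by rewrite mulmx_free_eq0 ?row_free_unit ?unitmx_inv.
  by apply: (can_inj (mulmxK Punit)); rewrite /= -scalemxAl mulmxKV // -vA !mulmxA.
- exists (v *m P); last by rewrite mulmx_free_eq0 ?row_free_unit.
  by rewrite -!mulmxA mulKVmx // !mulmxA vA scalemxAl.
Qed.

Section NormalMatrix.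
Context {C : numClosedFieldType} {n : nat} {A : 'M[C]_n}.
Hypothesis A_normal : A \is normalmx.

Local Notation P := (spectralmx A).
Local Notation X := (spectral_diag A).

Lemma normal_spectral_decomposition : A = invmx P *m diag_mx X *m P.
Proof. exact/orthomx_spectralP. Qed.

Lemma eigenvalue_spectralP a : reflect (exists k, a = X 0 k) (eigenvalue A a).
Proof.
rewrite [in X in reflect _ X]normal_spectral_decomposition eigenvalue_similar ?spectral_unit //.
exact: eigenvalue_diag_mx.
Qed.

Lemma diag_le_spectral_bound b i : (forall k, X 0 k <= b) -> A i i <= b.
Proof.
move=> X_le_b; have P_unitary := spectral_unitarymx A.
have : (P^t* *m P) i i = 1.
  by rewrite -invmx_unitary // mulVmx ?unitarymx_unit // mxE eqxx.
rewrite [in A i i]normal_spectral_decomposition invmx_unitary // mul_mx_diag !mxE.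
move=> /(congr1 ( *%R^~ b)); rewrite mul1r mulr_suml => <-.
apply: ler_sum => k _; rewrite !mxE mulrAC ler_wpM2l //.
by rewrite mulrC mul_conjC_ge0.
Qed.

End NormalMatrix.

Section RealSymmetric.
Context {R : rcfType} {n : nat} {A : 'M[R]_n}.
Hypothesis A_sym : A^T = A.

Local Notation AC := (map_mx (real_complex R) A).

Lemma map_real_complex_hermitian : AC \is hermsymmx.
Proof.
apply: realsym_hermsym.
  by apply/is_hermitianmxP; rewrite expr0 scale1r map_mx_id // map_trmx A_sym.
by apply/mxOverP => i j; rewrite mxE; apply/complex_realP; exists (A i j).
Qed.

Let eig k := complex.Re (spectral_diag AC 0 k).

Lemma spectral_diag_real k : spectral_diag AC 0 k = (eig k)%:C%C.
Proof.
rewrite RRe_real //.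
by have /mxOverP := hermitian_spectral_diag_real map_real_complex_hermitian.
Qed.

Lemma eigenvalue_symmetricP mu : reflect (exists k, mu = eig k) (eigenvalue A mu).
Proof.
rewrite -(eigenvalue_map (real_complex R)).
have AC_normal := hermitian_normalmx map_real_complex_hermitian.
apply: (iffP (eigenvalue_spectralP AC_normal _)) => -[k mu_eq]; exists k.
  by apply: (fmorph_inj (real_complex R)); rewrite mu_eq spectral_diag_real.
by rewrite spectral_diag_real mu_eq.
Qed.

Lemma diag_le_symmetric_bound b i : (forall k, eig k <= b) -> A i i <= b.
Proof.
move=> eig_le_b; rewrite -lecR.
have -> : (A i i)%:C%C = AC i i by rewrite mxE.
apply: (diag_le_spectral_bound (hermitian_normalmx map_real_complex_hermitian)).
by move=> k; rewrite spectral_diag_real lecR.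
Qed.

Lemma symmetric_max_eigenvalue : (0 < n)%N ->
  exists lam, [/\ eigenvalue A lam, forall mu, eigenvalue A mu -> mu <= lam
                & forall i, A i i <= lam].
Proof.
move=> n_gt0; pose k0 := [arg max_(k > Ordinal n_gt0) eig k]%O.
have eig_le k : eig k <= eig k0 by rewrite /k0; case: arg_maxP => // j _; apply.
exists (eig k0); split; first by apply/eigenvalue_symmetricP; exists k0.
  by move=> mu /eigenvalue_symmetricP [k ->].
by move=> i; apply: diag_le_symmetric_bound.
Qed.

End RealSymmetric.

Section HypergraphLaplacian.
Context (R : realType) {n : nat} (E : {set {set 'I_n}}).

Lemma hLaplacian_tr : (hLaplacian R E)^T = hLaplacian R E.
Proof.
apply/matrixP => i j; rewrite !mxE eq_sym; case: eqP => [->//|_].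
by congr (- _); apply: eq_bigl => e; rewrite [(i \in e) && _]andbC.
Qed.

Lemma hLaplacian_diag i : hLaplacian R E i i = (hdeg E i)%:R.
Proof. by rewrite mxE eqxx. Qed.

(* [0 <= b] accounts for [edge_min] returning [0] when [E] is empty. *)
Lemma edge_min_le_bound (f : {set 'I_n} -> R) b :
  0 <= b -> (forall e, e \in E -> f e <= b) -> edge_min E f <= b.
Proof.
rewrite /edge_min => b_ge0 f_le_b; case: pickP => // e0 e0E.
apply: le_trans (f_le_b e0 e0E).
by elim/big_rec: _ => // e x _ x_le; rewrite ge_min x_le orbT.
Qed.

Lemma edge_quantity_le_bound (e : {set 'I_n}) (b : R) : (0 < #|e|)%N ->
  (forall i, i \in e -> (hdeg E i)%:R <= b) -> edge_quantity R E e <= b.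
Proof.
move=> e_gt0 deg_le_b; rewrite /edge_quantity ler_pdivrMr ?ltr0n //.
apply: (@le_trans _ _ (\sum_(i in e) (hdeg E i)%:R)); first by rewrite lerBlDr lerDl.
by rewrite mulr_natr -sumr_const; apply: ler_sum.
Qed.

End HypergraphLaplacian.

Theorem corollary5 (R : realType) (n : nat) (E : {set {set 'I_n}}) :
  is_hypergraph E -> hconnected E -> (2 < n)%N ->
  exists lam : R, largest_eigenvalue (hLaplacian R E) lam /\
    edge_min E (edge_quantity R E) <= lam.
Proof.
move=> E_hyp _ n_gt2; have n_gt0 : (0 < n)%N by apply: leq_trans n_gt2.
have [lam [lam_eig lam_max diag_le]] := symmetric_max_eigenvalue (hLaplacian_tr R E) n_gt0.
exists lam; split=> //.
have deg_le i : (hdeg E i)%:R <= lam by rewrite -hLaplacian_diag.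
apply: edge_min_le_bound => [|e eE]; first exact: le_trans (deg_le (Ordinal n_gt0)).
apply: edge_quantity_le_bound => [|i _]; last exact: deg_le.
exact: leq_trans (E_hyp e eE).
Qed.
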